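(* In the $\{0,1\}$-speed setting, let $\mathcal B=\{B_1,\dots,B_m\}$ be a partition of $n$ jobs with processing times $\mathbf p$ into $m$ bags, and let $\mathcal B^*=\{B^*_1,\dots,B^*_m\}$ be an optimal partition of the jobs when all $m$ machines are available (i.e. a partition into $m$ bags with $\max_{B'\in\mathcal B^*}p(B')=opt(\mathbf p,m)$). If $\frac{\max_{B\in\mathcal B}p(B)}{\max_{B'\in\mathcal B^*}p(B')}\le\theta$, then $\mathcal B$ is a $\max\{\theta,2\}$-robust partition.
   Context: $\{0,1\}$-speed setting: there are $n$ jobs with processing times $p_1,\dots,p_n\ge0$ and $m$ machines, each of speed $0$ (unavailable) or $1$ (available); for a bag $B$, $p(B)=\sum_{j\in B}p_j$. $opt(\mathbf p,x)$ denotes the minimum makespan (maximum machine load) of scheduling the individual jobs on $x$ identical unit-speed machines. A partition of the jobs into $m$ bags is $\gamma$-robust if for every number $m_0\in\{1,\dots,m\}$ of available machines, the bags can be assigned (each as a whole) to $m_0$ identical unit-speed machines with makespan at most $\gamma\cdot opt(\mathbf p,m_0)$. *)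

From mathcomp Require Import all_boot all_order all_algebra.
Set Implicit Arguments. Unset Strict Implicit. Unset Printing Implicit Defensive.
Import Order.TTheory GRing.Theory Num.Theory.
Local Open Scope ring_scope.

(* Items of a finite type I with weights w are assigned by s : I -> 'I_k
   to k identical unit-speed machines; makespan = maximum machine load. *)
Definition makespan (R : realDomainType) (I : finType) (k : nat)
  (w : I -> R) (s : I -> 'I_k) : R :=
  \big[Num.max/0]_(i < k) \sum_(j | s j == i) w j.

(* opt(p, x): minimum makespan of scheduling the individual jobs on x
   machines (x >= 1; defined as 0 for x = 0, never used). *)
Definition opt (R : realDomainType) (n : nat) (p : 'I_n -> R) (x : nat) : R :=
  match x with
  | 0 => 0
  | x'.+1 => \big[Order.min/makespan p (fun _ : 'I_n => (ord0 : 'I_x'.+1))]_(s : {ffun 'I_n -> 'I_x'.+1})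
               makespan p s
  end.

(* A partition of the n jobs into m bags: B j is the bag of job j. *)
Definition bag_size (R : realDomainType) (n m : nat) (p : 'I_n -> R)
  (B : 'I_n -> 'I_m) (b : 'I_m) : R := \sum_(j | B j == b) p j.

Definition robust (R : realDomainType) (n m : nat) (p : 'I_n -> R)
  (B : 'I_n -> 'I_m) (gamma : R) : Prop :=
  forall m0 : nat, (1 <= m0 <= m)%N ->
    exists sigma : 'I_m -> 'I_m0,
      makespan (bag_size p B) sigma <= gamma * opt p m0.

From mathcomp Require Import all_boot all_order all_algebra.
From mathcomp Require Import ring lra.
Set Implicit Arguments. Unset Strict Implicit. Unset Printing Implicit Defensive.
Import Order.TTheory GRing.Theory Num.Theory.
Local Open Scope ring_scope.

(* Assign the bags to the m0 machines so as to minimise the sum of squared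
   machine loads.  Moving a bag b from its machine i to a machine c changes this
   potential by 2 p(b) (L_c + p(b) - L_i), so at the minimiser L_i - p(b) <= L_c
   for every bag b on i of positive size.  A machine whose load does not exceed
   the largest bag has load <= theta * opt(p, m) <= theta * opt(p, m0).  Any
   other machine carries two bags of positive size, whence L_i <= 2 L_c for
   every c, and averaging over c gives L_i <= 2 p(J) / m0 <= 2 opt(p, m0). *)

Section Loads.
Variables (R : realDomainType) (I : finType) (w : I -> R).

Definition load k (s : I -> 'I_k) (c : 'I_k) : R := \sum_(j | s j == c) w j.

Lemma load_le_makespan k (s : I -> 'I_k) c : load s c <= makespan w s.
Proof. exact: (le_bigmax _ (load s)). Qed.

Lemma load_finfun k (s : I -> 'I_k) : load (finfun s) =1 load s.
Proof. by move=> c; apply: eq_bigl => j; rewrite ffunE. Qed.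

Lemma makespan_finfun k (s : I -> 'I_k) : makespan w (finfun s) = makespan w s.
Proof. by apply: eq_bigr => c _; apply: load_finfun. Qed.

Lemma makespan_ge0 k (s : I -> 'I_k) : 0 <= makespan w s.
Proof. exact: bigmax_ge_id. Qed.

Lemma makespan_le k (s : I -> 'I_k) x :
  0 <= x -> (forall c, load s c <= x) -> makespan w s <= x.
Proof. by move=> x0 sx; apply: bigmax_le => // c _; apply: sx. Qed.

Lemma sum_load k (s : I -> 'I_k) : \sum_c load s c = \sum_j w j.
Proof. by rewrite [RHS](partition_big s xpredT). Qed.

Lemma sum_le_makespan k (s : I -> 'I_k) : \sum_j w j <= k%:R * makespan w s.
Proof.
rewrite -(sum_load s) mulr_natl -[k in _ *+ k]card_ord -sumr_const.
by apply: ler_sum => c _; apply: load_le_makespan.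
Qed.

Lemma makespan_comp_le k k' (f : 'I_k -> 'I_k') (s : I -> 'I_k) :
  injective f -> makespan w (f \o s) <= makespan w s.
Proof.
move=> f_inj; apply: makespan_le => [|c']; first exact: makespan_ge0.
case: (pickP (fun c => f c == c')) => [c /eqP <- | off_range].
  by rewrite /load; under eq_bigl do rewrite /= inj_eq //; apply: load_le_makespan.
by rewrite /load big_pred0 ?makespan_ge0 // => j; apply: off_range.
Qed.

Hypothesis w_ge0 : forall j, 0 <= w j.

Lemma makespan_le_sum k (s : I -> 'I_k) : makespan w s <= \sum_j w j.
Proof.
apply: makespan_le => [|c]; first exact: sumr_ge0.
by rewrite /load [leRHS](bigID (fun j => s j == c)) lerDl sumr_ge0.
Qed.

Lemma load_two_positive k (s : I -> 'I_k) c :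
  0 < load s c -> (forall j, w j < load s c) ->
  exists j1 j2, [/\ s j1 = c, s j2 = c, 0 < w j1, 0 < w j2
                  & w j1 + w j2 <= load s c].
Proof.
move=> load_gt0 w_lt_load.
have [j1 /andP[/eqP sj1 w1_gt0]] : exists j, (s j == c) && (0 < w j).
  by apply: psumr_neq0P => //; apply/eqP; rewrite gt_eqF.
have load_j1 : load s c = w j1 + \sum_(j | (s j == c) && (j != j1)) w j.
  by rewrite /load (bigD1 j1) ?sj1.
have [j2 /andP[/andP[/eqP sj2 j21] w2_gt0]] :
    exists j, ((s j == c) && (j != j1)) && (0 < w j).
  apply: psumr_neq0P => //; apply/eqP; rewrite gt_eqF //.
  by rewrite -(ltrD2l (w j1)) addr0 -load_j1.
exists j1, j2; split=> //; rewrite load_j1 lerD2l (bigD1 j2) ?sj2 ?eqxx //=.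
by rewrite lerDl sumr_ge0.
Qed.

End Loads.

Section LocalSearch.
Variables (R : realDomainType) (I : finType) (k : nat) (w : I -> R).
Implicit Types (s : I -> 'I_k) (b : I) (c d : 'I_k).

Definition reassign s b c : I -> 'I_k := fun j => if j == b then c else s j.

Definition potential s : R := \sum_d load w s d ^+ 2.

Definition locally_optimal s : Prop :=
  forall b, 0 < w b -> forall c, load w s (s b) - w b <= load w s c.

Lemma load_reassign s b c d :
  load w (reassign s b c) d
    = (if c == d then w b else 0) + (load w s d - (if s b == d then w b else 0)).
Proof.
rewrite /load [LHS]big_mkcond [in RHS]big_mkcond /=.
rewrite [LHS](bigD1 b) //= [in RHS](bigD1 b) //= /reassign eqxx.
rewrite addrAC subrr add0r; congr (_ + _).
by apply: eq_bigr => j /negbTE ->.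
Qed.

Lemma potential_reassign s b c : c != s b ->
  potential (reassign s b c)
    = potential s + 2 * w b * (load w s c + w b - load w s (s b)).
Proof.
move=> cb; rewrite /potential (bigD1 (s b)) //= (bigD1 c) //=.
rewrite [in RHS](bigD1 (s b)) //= [in RHS](bigD1 c) //=.
have -> : \sum_(d | (d != s b) && (d != c)) load w (reassign s b c) d ^+ 2
        = \sum_(d | (d != s b) && (d != c)) load w s d ^+ 2.
  apply: eq_bigr => d /andP[db dc].
  by rewrite load_reassign eq_sym (negbTE dc) eq_sym (negbTE db) add0r subr0.
rewrite !load_reassign !eqxx (negbTE cb) [s b == c]eq_sym (negbTE cb).
rewrite add0r subr0; ring.
Qed.

Lemma exists_locally_optimal (s0 : I -> 'I_k) : exists s, locally_optimal s.
Proof.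
case: (@arg_minP _ _ _ (finfun s0) xpredT
         (fun s : {ffun I -> 'I_k} => potential s)) => //.
move=> s _ s_min; exists s => b wb_gt0 c.
have [-> | cb] := eqVneq c (s b); first by rewrite gerBl ltW.
have := s_min (finfun (reassign s b c)) isT.
have -> : potential (finfun (reassign s b c)) = potential (reassign s b c).
  by apply: eq_bigr => d _; rewrite load_finfun.
rewrite potential_reassign // lerDl pmulr_rge0 ?mulr_gt0 // subr_ge0.
by rewrite lerBlDr.
Qed.

Hypothesis w_ge0 : forall j, 0 <= w j.

Lemma locally_optimal_overloaded_le s c d : locally_optimal s ->
  0 < load w s c -> (forall j, w j < load w s c) ->
  load w s c <= 2 * load w s d.
Proof.
move=> s_opt load_gt0 w_lt_load.
have [j1 [j2 [sj1 sj2 w1_gt0 w2_gt0 w12_le]]] :=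
  load_two_positive w_ge0 load_gt0 w_lt_load.
have := s_opt j1 w1_gt0 d; have := s_opt j2 w2_gt0 d.
rewrite sj1 sj2; lra.
Qed.

Lemma locally_optimal_overloaded_le_sum s c : locally_optimal s ->
  0 < load w s c -> (forall j, w j < load w s c) ->
  k%:R * load w s c <= 2 * \sum_j w j.
Proof.
move=> s_opt load_gt0 w_lt_load.
rewrite -(sum_load w s) [leRHS]mulr_sumr [leLHS]mulr_natl -[k in _ *+ k]card_ord.
rewrite -sumr_const.
by apply: ler_sum => d _; apply: locally_optimal_overloaded_le.
Qed.

End LocalSearch.

Section Opt.
Variables (R : realDomainType) (n : nat) (p : 'I_n -> R).

Lemma opt_le_makespan k (s : 'I_n -> 'I_k.+1) : opt p k.+1 <= makespan p s.
Proof. by rewrite -makespan_finfun; apply: bigmin_le. Qed.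

Lemma opt_attained k : exists s : 'I_n -> 'I_k.+1, opt p k.+1 = makespan p s.
Proof.
pose s0 : {ffun 'I_n -> 'I_k.+1} := [ffun=> ord0].
case: (@arg_minP _ _ _ s0 xpredT
         (fun s : {ffun 'I_n -> 'I_k.+1} => makespan p s)) => //.
move=> s _ s_min; exists s; apply/eqP; rewrite eq_le opt_le_makespan /=.
apply: le_bigmin => [|s' _]; last exact: s_min.
by rewrite -(makespan_finfun p (fun=> ord0)); apply: s_min.
Qed.

Lemma opt_ge0 k : 0 <= opt p k.+1.
Proof. by have [s ->] := opt_attained k; apply: makespan_ge0. Qed.

Lemma sum_le_opt k : \sum_j p j <= k.+1%:R * opt p k.+1.
Proof. by have [s ->] := opt_attained k; apply: sum_le_makespan. Qed.

Lemma opt_mono k k' : (k <= k')%N -> opt p k'.+1 <= opt p k.+1.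
Proof.
move=> le_kk'; have [s ->] := opt_attained k.
have le_kk'S : (k.+1 <= k'.+1)%N by [].
apply: le_trans (opt_le_makespan (widen_ord le_kk'S \o s)) _.
apply: makespan_comp_le => i j /(congr1 val) eq_ij; exact: val_inj.
Qed.

End Opt.

Lemma makespan_le_ratio (R : realFieldType) (I : finType) k (w : I -> R)
    (s s' : I -> 'I_k) (theta gamma : R) :
  (forall j, 0 <= w j) -> theta <= gamma ->
  makespan w s / makespan w s' <= theta -> makespan w s <= gamma * makespan w s'.
Proof.
move=> w_ge0 le_theta_gamma ratio.
have := makespan_ge0 w s'; rewrite le_eqVlt => /orP[/eqP ms'0 | ms'_gt0].
  (* the ratio is the junk value x / 0 = 0, but then all weights vanish *)
  rewrite -ms'0 mulr0; apply: le_trans (makespan_le_sum w_ge0 s) _.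
  by apply: le_trans (sum_le_makespan w s') _; rewrite -ms'0 mulr0.
rewrite ler_pdivrMr // in ratio; apply: le_trans ratio _.
by rewrite ler_wpM2r // ltW.
Qed.

Theorem lemma16 (R : realFieldType) (n m : nat) (p : 'I_n -> R)
  (B Bstar : 'I_n -> 'I_m) (theta : R) :
  (forall j, 0 <= p j) ->
  makespan p Bstar = opt p m ->
  makespan p B / makespan p Bstar <= theta ->
  robust p B (Num.max theta 2).
Proof.
move=> p_ge0 Bstar_opt ratio [//|k] /andP[_ k_lt_m].
case: m B Bstar Bstar_opt ratio k_lt_m => [//|m] B Bstar Bstar_opt ratio k_lt_m.
set gamma := Num.max theta 2; set o := opt p k.+1; set M := makespan p B.
have theta_le_gamma : theta <= gamma by rewrite le_max lexx.
have two_le_gamma : 2 <= gamma by rewrite le_max lexx orbT.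
have gamma_ge0 : 0 <= gamma by apply: le_trans two_le_gamma.
have M_le : M <= gamma * o.
  apply: le_trans (makespan_le_ratio p_ge0 theta_le_gamma ratio) _.
  by rewrite Bstar_opt ler_wpM2l ?opt_mono.
pose w := bag_size p B.
have w_ge0 b : 0 <= w b by apply: sumr_ge0.
have w_le_M b : w b <= M := load_le_makespan p B b.
have sum_w : \sum_b w b = \sum_j p j := sum_load p B.
have [sigma sigma_opt] := exists_locally_optimal w (fun=> ord0 : 'I_k.+1).
exists sigma; apply: makespan_le => [|c]; first by rewrite mulr_ge0 ?opt_ge0.
have [|M_lt_load] := leP (load w sigma c) M; first by move/le_trans; apply.
have two_o : load w sigma c <= 2 * o.
  rewrite -(ler_pM2l (ltr0Sn R k)) mulrCA.
  apply: (@le_trans _ _ (2 * \sum_j p j)); last by rewrite ler_wpM2l ?sum_le_opt.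
  rewrite -sum_w; apply: locally_optimal_overloaded_le_sum => // [|b].
  - exact: le_lt_trans (makespan_ge0 p B) M_lt_load.
  - exact: le_lt_trans (w_le_M b) M_lt_load.
by apply: le_trans two_o _; rewrite ler_wpM2r ?opt_ge0.
Qed.
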